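(* For every ordered graph $H$ and every $\varepsilon>0$ there exists $C\in\mathbb{N}$ such that for all $d\in\mathbb{N}$ and all subsets $\mathcal{L}\subseteq[d]$ with $|\mathcal{L}|\ge C$, there exists a random variable $\Phi$ taking values in the set of embeddings of $H$ into the complete ordered graph $K$ on $\{0,1\}^d$ with the following property. For all but at most $\varepsilon|\mathcal{L}|$ levels $\ell\in\mathcal{L}$, all but at most an $\varepsilon$-proportion of the pairs $\{x,y\}\subseteq\{0,1\}^d$ with $\delta(x,y)=\ell$ satisfy \[ \mathbb{P}(xy\in\Phi(H))\ge(1-\varepsilon)\frac{e(H)}{|\mathcal{L}|\,\tau_{\ell,d}}. \]
   Context: An ordered graph is a graph with a totally ordered vertex set. An embedding of an ordered graph $H$ into an ordered graph $K$ is an injective order-preserving map $V(H)\to V(K)$ sending edges to edges; $\Phi(H)$ denotes the image of $H$ (so $xy\in\Phi(H)$ means $xy$ is the image of an edge of $H$). For distinct $x,y\in\{0,1\}^d$, $\delta(x,y)=\min\{i:x_i\ne y_i\}$; $\{0,1\}^d$ is ordered lexicographically ($x<y$ iff $x_{\delta(x,y)}=0$). $\tau_{\ell,d}=2^{2d-\ell-1}$ is the number of pairs $\{x,y\}\subseteq\{0,1\}^d$ with $\delta(x,y)=\ell$. *)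

From mathcomp Require Import all_boot all_order all_algebra.
From mathcomp Require Import reals.
Set Implicit Arguments. Unset Strict Implicit. Unset Printing Implicit Defensive.
Import Order.TTheory GRing.Theory Num.Theory.

(* The cube {0,1}^d; coordinate i : 'I_d corresponds to coordinate i+1 of the paper. *)
Definition cube (d : nat) := {ffun 'I_d -> bool}.

(* delta(x,y) = l  (l 0-indexed: paper level l+1) *)
Definition delta_is (d : nat) (x y : cube d) (l : 'I_d) : bool :=
  (x l != y l) && [forall j : 'I_d, (j < l)%N ==> (x j == y j)].

(* lexicographic strict order: x < y iff x_{delta(x,y)} = 0 *)
Definition lexlt (d : nat) (x y : cube d) : bool :=
  [exists l : 'I_d, delta_is x y l && ~~ x l].

(* tau_{l,d} = 2^(2d - l - 1) for the paper's 1-indexed level l; here l is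
   0-indexed so the paper level is l.+1. *)
Definition tau (d : nat) (l : 'I_d) : nat := 2 ^ (2 * d - l.+1 - 1).

(* Ordered graph H: vertex set 'I_n with its natural order, edge relation E. *)
Definition num_edges (n : nat) (E : rel 'I_n) : nat :=
  #|[set p : 'I_n * 'I_n | E p.1 p.2 && (p.1 < p.2)%N]|.

(* embedding of H into the complete ordered graph K on {0,1}^d:
   injective order-preserving map (edges automatically go to edges of K). *)
Definition is_embedding (n d : nat) (f : {ffun 'I_n -> cube d}) : bool :=
  injectiveb f && [forall u : 'I_n, forall v : 'I_n, (u < v)%N ==> lexlt (f u) (f v)].

Definition edge_in_image (n d : nat) (E : rel 'I_n) (f : {ffun 'I_n -> cube d})
  (x y : cube d) : bool :=
  [exists u : 'I_n, exists v : 'I_n, [&& E u v, f u == x & f v == y]].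

Section Prob.
Variable R : realType.

(* a random variable with values in the embeddings = a probability
   distribution on the finite set of maps, supported on embeddings *)
Definition is_embedding_distr (n d : nat) (p : {ffun 'I_n -> cube d} -> R) : Prop :=
  (forall f, 0 <= p f)%R /\ (\sum_f p f = 1)%R /\
  (forall f, p f != 0%R -> is_embedding f).

Definition prob_edge (n d : nat) (E : rel 'I_n) (p : {ffun 'I_n -> cube d} -> R)
  (x y : cube d) : R :=
  (\sum_(f | edge_in_image E f x y) p f)%R.

Definition bad_pairs (n d : nat) (E : rel 'I_n) (p : {ffun 'I_n -> cube d} -> R)
  (eps : R) (L : {set 'I_d}) (l : 'I_d) : {set cube d * cube d} :=
  [set q : cube d * cube d | [&& lexlt q.1 q.2, delta_is q.1 q.2 l &
     ~~ (prob_edge E p q.1 q.2 >=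
         (1 - eps) * (num_edges E)%:R / (#|L|%:R * (tau l)%:R))%R]].

Definition good_level (n d : nat) (E : rel 'I_n) (p : {ffun 'I_n -> cube d} -> R)
  (eps : R) (L : {set 'I_d}) (l : 'I_d) : bool :=
  (#|bad_pairs E p eps L l|%:R <= eps * (tau l)%:R)%R.
End Prob.

(* Write L = {l_0 < l_1 < ...} and fix a block size B. A random configuration (t, j), with
   t < M = |L| - nB and j < B, places vertex k < n-1 of H at the level l_(t + k(j+1)).
   Vertex k is mapped to a vector which is 0 at its level, 1 at the levels of earlier
   vertices, a shared random bit at the other coordinates below its level and a private
   random bit above it; this is an embedding in which delta(Phi(u), Phi(v)) is the level of u.
   Fix an edge uv and a level l = l_s with nB <= s < M. Exactly B configurations put u at l,
   and for each of them the image of uv is uniform on a subcube of the pairs at level l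
   which loses at most one free bit per level of another vertex. Two configurations putting
   u at l share such a level for O(n^2 B) pairs only, so the second moment of the number of
   hits of a pair at level l is at most (1 + 2^n n^2 / B) times the squared mean, and by
   Chebyshev few pairs at level l get less than (1 - eps) times the mean. Only the 2nB
   outermost levels of L escape this argument. *)

From mathcomp Require Import all_boot all_order all_algebra.
From mathcomp Require Import reals.
From mathcomp Require Import zify ring lra.
Import Order.TTheory GRing.Theory Num.Theory.
Set Implicit Arguments. Unset Strict Implicit. Unset Printing Implicit Defensive.

Section FfunCounting.
Variable I : finType.

Lemma prod_nat_of_bool (P : pred I) : \prod_i (P i : nat) = [forall i, P i].
Proof.
case: (boolP [forall i, P i]) => [/forallP allP | /forallPn [i /negbTE notP]].
  by rewrite big1 // => i _; rewrite allP.
by rewrite (bigD1 i) //= notP.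
Qed.

Lemma nat_eq_ffun (T : eqType) (f g : {ffun I -> T}) :
  (f == g : nat) = \prod_i (f i == g i : nat).
Proof.
by rewrite prod_nat_of_bool; congr nat_of_bool; apply/eqP/eqfunP => [->|/ffunP].
Qed.

Lemma sum_ffun2_prod (J : finType) (h : I -> J -> J -> nat) :
  \sum_(f : {ffun I -> J}) \sum_(g : {ffun I -> J}) \prod_i h i (f i) (g i)
  = \prod_i \sum_a \sum_b h i a b.
Proof.
rewrite bigA_distr_bigA; apply: eq_bigr => f _.
by rewrite (bigA_distr_bigA (fun i b => h i (f i) b)).
Qed.

Lemma sum_ffun_agree (D : {set I}) (g : I -> bool) :
  (\sum_(b : {ffun I -> bool}) [forall k in D, b k == g k]) * 2 ^ #|D| = 2 ^ #|I|.
Proof.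
under eq_bigr do rewrite -prod_nat_of_bool.
rewrite -(bigA_distr_bigA (fun k (x : bool) => ((k \in D) ==> (x == g k) : nat))) /=.
have count_k k : \sum_(x : bool) ((k \in D) ==> (x == g k) : nat) = 2 ^ (k \notin D).
  by rewrite big_bool; case: (k \in D); case: (g k).
under eq_bigr do rewrite count_k.
rewrite -expn_sum -expnD; congr (2 ^ _).
rewrite -[in RHS](cardsC D) addnC; congr (_ + _).
rewrite -sum1_card [RHS]big_mkcond.
by apply: eq_bigr => i _; rewrite inE; case: (i \in D).
Qed.

End FfunCounting.

Lemma sum_sq_fibres (X Y : finType) (P : pred X) (g : X -> Y) :
  \sum_(y : Y) (\sum_(x : X) (P x && (g x == y) : nat)) ^ 2
  = \sum_(x : X) \sum_(x' : X) (P x && P x' && (g x == g x') : nat).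
Proof.
under eq_bigr => y _ do rewrite expnS expn1 big_distrl /=.
under eq_bigr => y _ do under eq_bigr => x _ do rewrite big_distrr /=.
rewrite exchange_big; apply: eq_bigr => x _; rewrite exchange_big; apply: eq_bigr => x' _.
rewrite (bigD1 (g x)) //= eqxx big1 ?addn0; last first.
  by move=> y; rewrite eq_sym => /negbTE ->; rewrite andbF.
by rewrite andbT eq_sym; case: (P x); case: (P x'); case: (g x == g x').
Qed.

Lemma sum_pairE (I J : finType) (G : I * J -> nat) :
  \sum_(x : I * J) G x = \sum_(i : I) \sum_(j : J) G (i, j).
Proof. by rewrite pair_bigA; apply: eq_bigr => -[]. Qed.

Lemma sum_pred_le1 (T : finType) (P : pred T) :
  (forall x y, P x -> P y -> x = y) -> \sum_(x : T) (P x : nat) <= 1.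
Proof.
move=> uniq_P; rewrite -big_mkcondr sum1_card; apply/card_le1_eqP => x y Px Py.
exact: uniq_P.
Qed.

Lemma card_le_of_inj (T K : finType) (U : eqType) (A : {set T}) (g : T -> U) (h : K -> U) :
  {in A &, injective g} -> (forall x, x \in A -> exists k, g x = h k) -> #|A| <= #|K|.
Proof.
move=> inj_g cover; rewrite !cardE -(size_map g (enum A)) -(size_map h (enum K)).
apply: uniq_leq_size.
  by rewrite map_inj_in_uniq ?enum_uniq // => x y; rewrite !mem_enum; apply: inj_g.
move=> y /mapP[x]; rewrite mem_enum => /cover[k ->] ->; exact: map_f (mem_enum _ k).
Qed.

Section BitSources.
Variable N : nat.

Inductive source := Fixed of bool | Rand of 'I_N.

Definition eval_src (k : source) (b : {ffun 'I_N -> bool}) : bool :=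
  match k with Fixed x => x | Rand i => b i end.

Definition rand_bits (k : source) : {set 'I_N} :=
  if k is Rand i then [set i] else set0.

Definition nrand (k1 k2 : source) : nat := #|rand_bits k1 :|: rand_bits k2|.

Lemma sum_eval_pair (k1 k2 : source) (x1 x2 : bool) :
  (\sum_b ((eval_src k1 b == x1) && (eval_src k2 b == x2) : nat)) * 2 ^ nrand k1 k2 <= 2 ^ N.
Proof.
pose g j := if j \in rand_bits k1 then x1 else x2.
set D := rand_bits k1 :|: rand_bits k2.
apply: (@leq_trans
  ((\sum_(b : {ffun 'I_N -> bool}) ([forall j in D, b j == g j] : nat)) * 2 ^ #|D|)).
  rewrite leq_mul2r; apply/orP; right; apply: leq_sum => b _.
  case: andP => //= -[/eqP ev1 /eqP ev2]; rewrite lt0b.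
  have in_rand k j : j \in rand_bits k -> eval_src k b = b j.
    by case: k => [?|i] /=; rewrite ?inE // => /eqP ->.
  apply/forall_inP => j; rewrite in_setU /g.
  by case: ifP => [/in_rand <- _|_ /= /in_rand <-]; rewrite ?ev1 ?ev2.
by rewrite (sum_ffun_agree D g) card_ord.
Qed.

Lemma card_bits : #|{ffun 'I_N -> bool}| = 2 ^ N.
Proof. by rewrite card_ffun card_bool card_ord. Qed.

Definition collisions (k1 k2 k1' k2' : source) : nat :=
  \sum_(b : {ffun 'I_N -> bool}) \sum_(b' : {ffun 'I_N -> bool})
     ((eval_src k1 b == eval_src k1' b') && (eval_src k2 b == eval_src k2' b') : nat).

Lemma collisions_boundl k1 k2 k1' k2' :
  collisions k1 k2 k1' k2' * 2 ^ nrand k1 k2 <= 2 ^ N * 2 ^ N.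
Proof.
rewrite /collisions exchange_big big_distrl -{1}card_bits -sum_nat_const /=.
apply: leq_sum => b' _; exact: sum_eval_pair.
Qed.

Lemma collisions_boundr k1 k2 k1' k2' :
  collisions k1 k2 k1' k2' * 2 ^ nrand k1' k2' <= 2 ^ N * 2 ^ N.
Proof.
rewrite /collisions big_distrl -{1}card_bits -sum_nat_const /=.
apply: leq_sum => b _; under eq_bigr => b' _ do rewrite ![_ == eval_src _ b']eq_sym.
exact: sum_eval_pair.
Qed.

Lemma collisions_bound k1 k2 k1' k2' :
  collisions k1 k2 k1' k2' * 2 ^ maxn (nrand k1 k2) (nrand k1' k2') <= 2 ^ N * 2 ^ N.
Proof.
case: (leqP (nrand k1 k2) (nrand k1' k2')) => _.
  exact: collisions_boundr.
exact: collisions_boundl.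
Qed.

End BitSources.

Section LevelEnumeration.
Variables (d : nat) (L : {set 'I_d}).

Definition level_seq : seq nat := [seq val l | l <- enum L].

(* [d] is the junk value for [s >= #|L|]. *)
Definition lnth (s : nat) : nat := nth d level_seq s.

Definition lindex (l : 'I_d) : nat := index (val l) level_seq.

Lemma size_level_seq : size level_seq = #|L|.
Proof. by rewrite size_map cardE. Qed.

Lemma sorted_level_seq : sorted ltn level_seq.
Proof.
rewrite /level_seq (_ : enum L = [seq x <- enum 'I_d | x \in L]); last by rewrite enumT.
rewrite sorted_map; apply: sorted_filter; first exact: ltn_trans.
by rewrite -sorted_map val_enum_ord iota_ltn_sorted.
Qed.

Lemma lnth_mono s t : s < t -> t < #|L| -> lnth s < lnth t.
Proof.
move=> lt_st lt_tL; apply: (sorted_ltn_nth ltn_trans d sorted_level_seq) => //;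
  by rewrite inE size_level_seq // (ltn_trans lt_st).
Qed.

Lemma lnth_inj s t : s < #|L| -> t < #|L| -> lnth s = lnth t -> s = t.
Proof.
move=> sL tL eq_st; case: (ltngtP s t) => // [/lnth_mono|/lnth_mono] lt_st.
  by move: (lt_st tL); rewrite eq_st ltnn.
by move: (lt_st sL); rewrite eq_st ltnn.
Qed.

Lemma lnth_lt s : s < #|L| -> lnth s < d.
Proof.
move=> sL; have : lnth s \in level_seq by rewrite mem_nth // size_level_seq.
by case/mapP=> l _ ->; apply: ltn_ord.
Qed.

Definition lnth_ord s (lt_sL : s < #|L|) : 'I_d := Ordinal (lnth_lt lt_sL).

Lemma lindex_lt l : l \in L -> lindex l < #|L|.
Proof. by move=> lL; rewrite -size_level_seq index_mem map_f ?mem_enum. Qed.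

Lemma lnth_lindex l : l \in L -> lnth (lindex l) = l.
Proof. by move=> lL; rewrite /lnth nth_index // map_f ?mem_enum. Qed.

Lemma card_outer_levels a b :
  #|[set l in L | (lindex l < a) || (b <= lindex l)]| <= a + (#|L| - b).
Proof.
rewrite -[X in _ <= X]card_ord.
pose h (j : 'I_(a + (#|L| - b))) := if j < a then val j else b + (j - a).
apply: (card_le_of_inj (g := lindex) (h := h)).
  move=> l1 l2; rewrite !inE => /andP[l1L _] /andP[l2L _] eq_idx.
  by apply: ord_inj; rewrite -(lnth_lindex l1L) -(lnth_lindex l2L) eq_idx.
move=> l; rewrite inE => /andP[lL /orP[lt_la|le_bl]].
  have lt_l : lindex l < a + (#|L| - b) by apply: leq_trans lt_la (leq_addr _ _).
  by exists (Ordinal lt_l); rewrite /h /= lt_la.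
have lt_l : a + (lindex l - b) < a + (#|L| - b).
  by rewrite ltn_add2l ltn_sub2r ?lindex_lt // (leq_ltn_trans le_bl (lindex_lt lL)).
by exists (Ordinal lt_l); rewrite /h /= ltnNge leq_addr /= addKn subnKC.
Qed.

End LevelEnumeration.

Section LevelPairs.
Variable d : nat.

(* Number of unconstrained bits at coordinate [p] of a pair [(x, y)] with [delta(x, y) = l]. *)
Definition free_bits (l p : nat) : nat := if p < l then 1 else if p == l then 0 else 2.

Lemma tau_free_bits (l : 'I_d) : tau l = 2 ^ (\sum_(p < d) free_bits l p).
Proof.
have lt_ld := ltn_ord l; congr (2 ^ _); rewrite -(big_mkord xpredT (free_bits l)).
rewrite (big_cat_nat (n := l)) //= ?(ltnW lt_ld) // [X in _ + X](big_cat_nat (n := l.+1)) //=.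
rewrite big_nat1 /free_bits ltnn eqxx (eq_big_nat _ _ (F2 := fun => 1)); last first.
  by move=> p /andP[_ ->].
rewrite [X in _ + X](eq_big_nat _ _ (F2 := fun => 2)); last first.
  by move=> p /andP[lt_lp _]; rewrite ltnNge (ltnW lt_lp) gtn_eqF.
by rewrite !sum_nat_const_nat; lia.
Qed.

Definition level_pairs (l : 'I_d) : {set cube d * cube d} :=
  [set q | lexlt q.1 q.2 && delta_is q.1 q.2 l].

Lemma delta_is_uniq (x y : cube d) (l1 l2 : 'I_d) :
  delta_is x y l1 -> delta_is x y l2 -> l1 = l2.
Proof.
move=> /andP[neq1 /forall_inP agree1] /andP[neq2 /forall_inP agree2].
case: (ltngtP l1 l2) => [/agree2|/agree1|/val_inj //]; by rewrite ?(negbTE neq1) ?(negbTE neq2).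
Qed.

Definition level_pair_coord (l p : nat) (a b : bool) : bool :=
  if p < l then a == b else if p == l then ~~ a && b else true.

Lemma level_pairs_coord (l p : 'I_d) (q : cube d * cube d) :
  q \in level_pairs l -> level_pair_coord l p (q.1 p) (q.2 p).
Proof.
rewrite inE => /andP[/existsP[l' /andP[delta' low]] delta].
move: low; rewrite (delta_is_uniq delta' delta) => {l' delta'} low.
move: delta => /andP[neq /forall_inP agree]; rewrite /level_pair_coord.
case: ltngtP => [/agree //|//|/val_inj ->].
by move: neq low; case: (q.1 l); case: (q.2 l).
Qed.

Lemma card_level_pairs (l : 'I_d) : #|level_pairs l| <= tau l.
Proof.
rewrite -sum1_card big_mkcond /= tau_free_bits expn_sum.
have <- : \prod_(p < d) \sum_a \sum_b (level_pair_coord l p a b : nat) =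
    \prod_(p < d) 2 ^ free_bits l p.
  by apply: eq_bigr => p _; rewrite /level_pair_coord /free_bits; case: ltngtP; rewrite !big_bool.
rewrite -sum_ffun2_prod pair_bigA /=; apply: leq_sum => -[x y] _.
case: ifP => // /level_pairs_coord coord; rewrite big1 // => p _.
by rewrite (coord p).
Qed.

End LevelPairs.

Section Construction.
Variables (n d : nat) (L : {set 'I_d}) (B M : nat).
Hypothesis room : M + n * B <= #|L|.

Lemma lt_card_of_lt s : s < M -> s < #|L|.
Proof. by move=> lt_sM; apply: leq_trans lt_sM (leq_trans (leq_addr _ _) room). Qed.

Definition config := ('I_M * 'I_B)%type.

Definition lev_index (c : config) (k : nat) : nat := c.1 + k * (c.2).+1.

(* The last vertex gets the sentinel level [d], above every coordinate. *)
Definition lev (c : config) (k : nat) : nat :=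
  if k < n.-1 then lnth L (lev_index c k) else d.

Lemma lev_index_lt c k : k < n.-1 -> lev_index c k < #|L|.
Proof.
case: c => [[t lt_tM] [s lt_sB]] /= lt_kn; rewrite /lev_index /=.
have le_kn : k * s.+1 <= n * B := leq_mul (ltnW (leq_trans lt_kn (leq_pred n))) lt_sB.
by apply: leq_trans room; rewrite -addSn leq_add.
Qed.

Lemma lev_lt c k : k < n.-1 -> lev c k < d.
Proof. by move=> lt_kn; rewrite /lev lt_kn; apply/lnth_lt/lev_index_lt. Qed.

Lemma lev_lt_inv c k : lev c k < d -> k < n.-1.
Proof. by rewrite /lev; case: ifP => //; rewrite ltnn. Qed.

Lemma lev_mono c i j : i < j -> j < n -> lev c i < lev c j.
Proof.
move=> lt_ij lt_jn; have lt_in : i < n.-1 by lia.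
rewrite {2}/lev; case: ifP => [lt_jn'|_]; last exact: lev_lt.
rewrite /lev lt_in; apply: lnth_mono; last exact: lev_index_lt.
by rewrite ltn_add2l ltn_mul2r lt_ij.
Qed.

Lemma lev_mono_le c i j : i <= j -> j < n -> lev c i <= lev c j.
Proof. by rewrite leq_eqVlt => /predU1P[-> //|lt_ij] lt_jn; exact/ltnW/lev_mono. Qed.

(* Random bit [n] is shared by all vertices, random bit [i] is private to vertex [i]. *)
Definition src (c : config) (i : 'I_n) (p : nat) : source n.+1 :=
  if p < lev c i then
    (if [exists k : 'I_n, (k < i) && (lev c k == p)] then Fixed _ true else Rand ord_max)
  else if p == lev c i then Fixed _ false else Rand (widen_ord (leqnSn n) i).

Definition seed := {ffun 'I_d -> {ffun 'I_n.+1 -> bool}}.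

Definition sample : predArgType := (config * seed)%type.

Lemma card_seed : #|seed| = (2 ^ n.+1) ^ d.
Proof. by rewrite card_ffun card_ffun card_bool !card_ord. Qed.

Definition embed (c : config) (w : seed) : {ffun 'I_n -> cube d} :=
  [ffun i => [ffun p : 'I_d => eval_src (src c i p) (w p)]].

Lemma src_below c (u v : 'I_n) p : u < v -> p < lev c u -> src c u p = src c v p.
Proof.
move=> lt_uv lt_pu.
have lt_pv : p < lev c v by apply: leq_trans lt_pu (lev_mono_le _ (ltnW lt_uv) _).
rewrite /src lt_pu lt_pv; congr (if _ then _ else _).
apply/existsP/existsP => [[k /andP[lt_ku eq_kp]]|[k /andP[lt_kv /eqP eq_kp]]].
  by exists k; rewrite (ltn_trans lt_ku lt_uv).
exists k; rewrite eq_kp eqxx andbT ltnNge; apply/negP => le_uk.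
by move: (lev_mono_le c le_uk (ltn_ord k)); rewrite eq_kp leqNgt lt_pu.
Qed.

Lemma src_at c (u v : 'I_n) : u < v ->
  src c u (lev c u) = Fixed _ false /\ src c v (lev c u) = Fixed _ true.
Proof.
move=> lt_uv; rewrite /src ltnn eqxx (lev_mono c lt_uv (ltn_ord v)); split => //.
by case: existsP => // -[]; exists u; rewrite lt_uv eqxx.
Qed.

Lemma src_above c (u v : 'I_n) p : u < v -> lev c u < p ->
  src c u p = Rand (widen_ord (leqnSn n) u) /\ src c v p <> Rand (widen_ord (leqnSn n) u).
Proof.
move=> lt_uv lt_up; rewrite /src ltnNge (ltnW lt_up) /= (gtn_eqF lt_up); split => //.
have rand_val (j : 'I_n.+1) : Rand j = Rand (widen_ord (leqnSn n) u) -> val j = u.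
  by move/(congr1 (fun k : source n.+1 => if k is Rand j then val j else 0)).
case: ifP => _; [case: ifP => _ // | case: ifP => _ //] => /rand_val /= eq_ju.
  by move: (ltn_ord u); rewrite -eq_ju ltnn.
by move: lt_uv; rewrite eq_ju ltnn.
Qed.

Lemma src_fixed c (i : 'I_n) (p : 'I_d) b : src c i p = Fixed _ b ->
  exists2 k : 'I_n, k < n.-1 & lev c k = p.
Proof.
rewrite /src; case: ifP => lt_pi.
  case: existsP => [[k /andP[lt_ki /eqP eq_kp]] _|//].
  by exists k => //; move: (ltn_ord i) lt_ki; lia.
case: ifP => // /eqP eq_pi _; exists i => //.
by move: eq_pi; rewrite /lev; case: ifP => // _ eq_pd; move: (ltn_ord p); rewrite eq_pd ltnn.
Qed.

Definition lev_ord c (u : 'I_n) (lt_un : u < n.-1) : 'I_d := Ordinal (lev_lt c lt_un).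

Lemma embed_delta c w (u v : 'I_n) (lt_un : u < n.-1) : u < v ->
  delta_is (embed c w u) (embed c w v) (lev_ord c lt_un) /\
  lexlt (embed c w u) (embed c w v).
Proof.
move=> lt_uv; have [src_u src_v] := src_at c lt_uv.
have delta : delta_is (embed c w u) (embed c w v) (lev_ord c lt_un).
  rewrite /delta_is !ffunE /= src_u src_v /=; apply/forall_inP => j lt_j.
  by rewrite !ffunE (src_below lt_uv lt_j).
split => //; apply/existsP; exists (lev_ord c lt_un).
by rewrite delta !ffunE /= src_u.
Qed.

Lemma embed_is_embedding c w : is_embedding (embed c w).
Proof.
have ordered (u v : 'I_n) :
    u < v -> lexlt (embed c w u) (embed c w v) /\ embed c w u != embed c w v.
  move=> lt_uv; have lt_un : u < n.-1 by move: (ltn_ord v) lt_uv; lia.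
  have [delta lex] := embed_delta c w lt_un lt_uv; split => //.
  by apply: contraTneq delta => ->; rewrite /delta_is eqxx.
apply/andP; split.
  apply/injectiveP => u v eq_uv.
  by case: (ltngtP u v) => [/ordered|/ordered|/val_inj //]; rewrite eq_uv eqxx => -[].
by apply/forallP => u; apply/forallP => v; apply/implyP => /ordered[].
Qed.

End Construction.

Section EdgeStatistics.
Variables (n d : nat) (L : {set 'I_d}) (B M : nat).
Hypothesis room : M + n * B <= #|L|.
Variables (u v : 'I_n) (s : nat).
Hypothesis lt_uv : u < v.
Hypothesis le_nB_s : n * B <= s.
Hypothesis lt_sM : s < M.

Let lt_un : u < n.-1.
Proof. by move: lt_uv (ltn_ord v); lia. Qed.

Definition lvl : nat := lnth L s.

Definition lvl_ord : 'I_d := lnth_ord (lt_card_of_lt room lt_sM).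

Definition at_lvl (c : config B M) : bool := lev n L c u == lvl.

Lemma at_lvlE c : at_lvl c = (lev_index c u == s).
Proof.
rewrite /at_lvl /lev lt_un; apply/eqP/eqP => [|-> //].
exact: lnth_inj (lev_index_lt room c lt_un) (lt_card_of_lt room lt_sM).
Qed.

Lemma sum_at_lvl : \sum_(c : config B M) at_lvl c = B.
Proof.
rewrite -(pair_bigA _ (fun t j => (at_lvl (t, j) : nat))) exchange_big /=.
rewrite -[B in RHS]card_ord -sum1_card; apply: eq_bigr => j _.
have le_uj : u * j.+1 <= s.
  by apply: leq_trans le_nB_s; apply: leq_mul; [apply: ltnW | apply: ltn_ord].
have lt_tM : s - u * j.+1 < M by apply: leq_ltn_trans (leq_subr _ _) lt_sM.
rewrite (bigD1 (Ordinal lt_tM)) //= (at_lvlE (Ordinal lt_tM, j)) /lev_index /= subnK //.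
rewrite eqxx big1 // => t; rewrite (at_lvlE (t, j)) /lev_index /= -(inj_eq val_inj) /=.
by move=> ne_t; apply/eqP; rewrite eqb0; apply: contra ne_t => /eqP <-; rewrite addnK.
Qed.

Definition edge_image (x : sample n d B M) : cube d * cube d :=
  (embed L x.1 x.2 u, embed L x.1 x.2 v).

Definition edge_count (q : cube d * cube d) : nat :=
  \sum_(x : sample n d B M) (at_lvl x.1 && (edge_image x == q)).

Lemma edge_image_level_pair x : at_lvl x.1 -> edge_image x \in level_pairs lvl_ord.
Proof.
move=> /eqP at_x; have [delta lex] := embed_delta room x.1 x.2 lt_un lt_uv.
have -> : lvl_ord = lev_ord room x.1 lt_un by apply: val_inj; rewrite /= at_x.
by rewrite inE lex delta.
Qed.

Lemma sum_edge_count : \sum_(q in level_pairs lvl_ord) edge_count q = B * #|seed n d|.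
Proof.
have count_x (x : sample n d B M) :
    \sum_(q in level_pairs lvl_ord) (at_lvl x.1 && (edge_image x == q) : nat) = at_lvl x.1.
  case: (boolP (at_lvl x.1)) => [at_x|_]; last by rewrite big1.
  rewrite (bigD1 (edge_image x)) ?edge_image_level_pair //= eqxx big1 // => q /andP[_].
  by rewrite eq_sym => /negbTE ->.
rewrite exchange_big /=; under eq_bigr do rewrite count_x.
rewrite sum_pairE -[B in B * _]sum_at_lvl big_distrl /=; apply: eq_bigr => c _.
by rewrite -sum1_card big_distrr /=; apply: eq_bigr => w _; rewrite muln1.
Qed.

Definition cfg_collisions (c c' : config B M) : nat :=
  \sum_(w : seed n d) \sum_(w' : seed n d)
    ((embed L c w u == embed L c' w' u) && (embed L c w v == embed L c' w' v)).

Lemma sum_sq_edge_count : \sum_q edge_count q ^ 2 =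
  \sum_(c : config B M) \sum_(c' : config B M) (at_lvl c && at_lvl c') * cfg_collisions c c'.
Proof.
rewrite sum_sq_fibres sum_pairE; apply: eq_bigr => c _.
under eq_bigr do rewrite sum_pairE.
rewrite exchange_big /=; apply: eq_bigr => c' _.
rewrite /cfg_collisions big_distrr; apply: eq_bigr => w _.
rewrite big_distrr; apply: eq_bigr => w' _.
by rewrite /edge_image xpair_eqE /= -mulnb.
Qed.

Lemma cfg_collisions_prod c c' : cfg_collisions c c' =
  \prod_(p : 'I_d) collisions (src L c u p) (src L c v p) (src L c' u p) (src L c' v p).
Proof.
rewrite /cfg_collisions /collisions -sum_ffun2_prod; apply: eq_bigr => w _; apply: eq_bigr => w' _.
by rewrite -mulnb !nat_eq_ffun -big_split /=; apply: eq_bigr => p _; rewrite !ffunE mulnb.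
Qed.

Definition other_levels (c : config B M) : {set 'I_d} :=
  [set p : 'I_d | (val p != lvl) && [exists k : 'I_n, lev n L c k == p]].

Lemma free_bits_le_nrand c (p : 'I_d) : at_lvl c ->
  free_bits lvl p <= nrand (src L c u p) (src L c v p) + (p \in other_levels c).
Proof.
move=> /eqP at_c; rewrite /free_bits.
have other (k : 'I_n) b : src L c k p = Fixed n.+1 b -> val p != lvl -> p \in other_levels c.
  move=> src_kp ne_p; have [k' _ eq_k'] := src_fixed room src_kp.
  by rewrite inE ne_p; apply/existsP; exists k'; rewrite eq_k'.
case: (ltngtP p lvl) => [lt_p|lt_p|//].
- have lt_pu : p < lev n L c u by rewrite at_c.
  rewrite -(src_below room lt_uv lt_pu) /nrand setUid.
  case src_p: (src L c u p) => [b|j]; last by rewrite cards1.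
  by rewrite (other _ _ src_p) ?addn1 // ltn_eqF.
- have lt_up : lev n L c u < p by rewrite at_c.
  have [-> src_v] := src_above lt_uv lt_up; rewrite /nrand.
  case src_vp: (src L c v p) => [b|j].
    by rewrite /= setU0 cards1 (other _ _ src_vp) // gtn_eqF.
  rewrite /= cards2; suff -> : widen_ord (leqnSn n) u != j by [].
  by apply/eqP => eq_j; apply: src_v; rewrite src_vp eq_j.
Qed.

Lemma collisions_coord_bound c c' (p : 'I_d) : at_lvl c -> at_lvl c' ->
  collisions (src L c u p) (src L c v p) (src L c' u p) (src L c' v p) * 2 ^ free_bits lvl p
  <= 2 ^ n.+1 * 2 ^ n.+1 * 2 ^ ((p \in other_levels c) && (p \in other_levels c')).
Proof.
move=> at_c at_c'; set both := (_ && _).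
have le_free : free_bits lvl p <=
    maxn (nrand (src L c u p) (src L c v p)) (nrand (src L c' u p) (src L c' v p)) + both.
  move: (free_bits_le_nrand p at_c) (free_bits_le_nrand p at_c'); rewrite /both.
  by case: (p \in other_levels c); case: (p \in other_levels c'); lia.
apply: leq_trans (leq_mul (leqnn _) (leq_pexp2l _ le_free)) _ => //.
by rewrite expnD mulnA leq_mul2r collisions_bound orbT.
Qed.

Lemma cfg_collisions_bound c c' : at_lvl c -> at_lvl c' ->
  cfg_collisions c c' * tau lvl_ord <= #|seed n d| ^ 2 * 2 ^ #|other_levels c :&: other_levels c'|.
Proof.
move=> at_c at_c'; rewrite cfg_collisions_prod tau_free_bits expn_sum -big_split /=.
apply: leq_trans (leq_prod (fun p _ => collisions_coord_bound p at_c at_c')) _.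
rewrite big_split /= prod_nat_const card_ord -expn_sum; apply: eq_leq; congr (_ * 2 ^ _).
  by rewrite card_seed expnMn mulnn.
rewrite -cardsE -sum1dep_card [RHS]big_mkcond /=.
by apply: eq_bigr => p _; rewrite in_setI; case: (_ && _).
Qed.

Lemma card_other_levels c : #|other_levels c| <= n.
Proof.
rewrite -[X in _ <= X]card_ord.
apply: (card_le_of_inj (g := val) (h := fun k : 'I_n => lev n L c k)).
  by move=> p q _ _; apply: val_inj.
by move=> p; rewrite inE => /andP[_ /existsP[k /eqP lev_k]]; exists k.
Qed.

Definition overlap (c c' : config B M) : nat :=
  \sum_(k : 'I_n) \sum_(k' : 'I_n) [&& k' < n.-1, k' != u & lev n L c k == lev n L c' k'].

Lemma exp_common_levels_le c c' : at_lvl c' ->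
  2 ^ #|other_levels c :&: other_levels c'| <= 1 + 2 ^ n * overlap c c'.
Proof.
move=> /eqP at_c'; have [->|[p]] := set_0Vmem (other_levels c :&: other_levels c').
  by rewrite cards0.
rewrite !inE => /andP[/andP[_ /existsP[k /eqP lev_k]] /andP[ne_p /existsP[k' /eqP lev_k']]].
have lt_k' : k' < n.-1 by apply: (@lev_lt_inv _ _ L _ _ c'); rewrite lev_k'.
have ne_k' : k' != u.
  by apply: contraNneq ne_p => eq_k'; apply/eqP; rewrite -at_c' -eq_k' lev_k'.
have pos : 0 < overlap c c'.
  rewrite /overlap (bigD1 k) //= [X in X + _](bigD1 k') //= -addnA addn_gt0 lt0b.
  by rewrite lt_k' ne_k' lev_k lev_k' eqxx.
apply: leq_trans (leq_addl _ _); apply: leq_trans (leq_pmulr _ pos).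
by rewrite leq_exp2l // (leq_trans (subset_leq_card (subsetIl _ _))) ?card_other_levels.
Qed.

Lemma config_unique (k' : 'I_n) c1 c2 : k' < n.-1 -> k' != u -> at_lvl c1 -> at_lvl c2 ->
  lev n L c1 k' = lev n L c2 k' -> c1 = c2.
Proof.
move=> lt_k' ne_k'; rewrite !at_lvlE /lev lt_k' => /eqP idx1 /eqP idx2.
move/(lnth_inj (lev_index_lt room c1 lt_k') (lev_index_lt room c2 lt_k')).
move: idx1 idx2 ne_k'; rewrite -(inj_eq val_inj) /lev_index.
case: c1 c2 => [t1 j1] [t2 j2] /= idx1 idx2 ne_k' idx'.
have eq_j : j1 = j2 :> nat by move: idx1 idx2 idx' ne_k'; nia.
have eq_t : t1 = t2 :> nat by move: idx1 idx2 eq_j; nia.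
by congr pair; apply: val_inj.
Qed.

Lemma sum_overlap : \sum_(c : config B M) \sum_(c' : config B M)
  (at_lvl c && at_lvl c') * overlap c c' <= n * n * B.
Proof.
rewrite /overlap.
under eq_bigr do under eq_bigr do rewrite big_distrr /=.
under eq_bigr do rewrite exchange_big /=.
rewrite exchange_big /= -[n in X in _ <= X]card_ord -mulnA -sum_nat_const; apply: leq_sum => k _.
under eq_bigr do under eq_bigr do rewrite big_distrr /=.
under eq_bigr do rewrite exchange_big /=.
rewrite exchange_big /= -sum_nat_const; apply: leq_sum => k' _.
case: (boolP ((k' < n.-1) && (k' != u))) => [/andP[lt_k' ne_k']|bad_k']; last first.
  by rewrite big1 // => c _; rewrite big1 // => c' _; rewrite andbA (negbTE bad_k') muln0.
rewrite -[B in X in _ <= X]sum_at_lvl; apply: leq_sum => c _.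
case: (boolP (at_lvl c)) => at_c /=; last by rewrite big1.
under eq_bigr do rewrite mulnb.
apply: sum_pred_le1 => c1 c2 /and4P[at_c1 _ _ /eqP lev_c1] /and4P[at_c2 _ _ /eqP lev_c2].
by apply: (config_unique lt_k' ne_k' at_c1 at_c2); rewrite -lev_c1 -lev_c2.
Qed.

Lemma sum_at_lvl_pairs :
  \sum_(c : config B M) \sum_(c' : config B M) (at_lvl c && at_lvl c') = B * B.
Proof.
rewrite -[in RHS]sum_at_lvl big_distrl /=; apply: eq_bigr => c _.
by rewrite big_distrr /=; apply: eq_bigr => c' _; rewrite mulnb.
Qed.

Lemma sum_sq_bound :
  (\sum_(q in level_pairs lvl_ord) edge_count q ^ 2) * tau lvl_ord
  <= #|seed n d| ^ 2 * (B * B + 2 ^ n * (n * n * B)).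
Proof.
set S2 := #|seed n d| ^ 2.
apply: (@leq_trans ((\sum_q edge_count q ^ 2) * tau lvl_ord)).
  by rewrite leq_mul2r [X in _ <= X](bigID (mem (level_pairs lvl_ord))) /= leq_addr orbT.
rewrite sum_sq_edge_count big_distrl /=.
apply: (@leq_trans (\sum_c \sum_c'
    S2 * ((at_lvl c && at_lvl c') + 2 ^ n * ((at_lvl c && at_lvl c') * overlap c c')))).
  apply: leq_sum => c _; rewrite big_distrl /=; apply: leq_sum => c' _.
  case: (boolP (at_lvl c && at_lvl c')) => [/andP[at_c at_c']|_]; rewrite ?mul0n // !mul1n.
  apply: leq_trans (cfg_collisions_bound at_c at_c') _.
  by rewrite leq_mul2l exp_common_levels_le ?orbT.
under eq_bigr do rewrite -big_distrr; rewrite -big_distrr leq_mul2l /=; apply/orP; right.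
under eq_bigr do rewrite big_split; rewrite big_split /= sum_at_lvl_pairs leq_add2l.
by under eq_bigr do rewrite -big_distrr; rewrite -big_distrr leq_mul2l sum_overlap orbT.
Qed.

End EdgeStatistics.

Local Open Scope ring_scope.

Lemma count_below_mean (R : realFieldType) (T : finType) (A : {pred T}) (X : T -> R)
    (t Q eta e : R) :
  0 < t -> 0 < Q -> 0 < e ->
  \sum_(q in A) 1 <= t -> \sum_(q in A) X q = Q ->
  (\sum_(q in A) X q ^+ 2) * t <= Q ^+ 2 * (1 + eta) ->
  (\sum_(q in A) (if X q < (1 - e) * (Q / t) then 1 else 0)) * e ^+ 2 <= eta * t.
Proof.
move=> t_gt0 Q_gt0 e_gt0 cardA sumX sumX2.
set mu := Q / t; have mu_gt0 : 0 < mu by rewrite divr_gt0.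
have Qmu : Q = mu * t by rewrite /mu divfK ?gt_eqF.
have variance : \sum_(q in A) (X q - mu) ^+ 2 <= eta * mu ^+ 2 * t.
  have -> : \sum_(q in A) (X q - mu) ^+ 2 =
      \sum_(q in A) X q ^+ 2 - 2 * mu * Q + mu ^+ 2 * \sum_(q in A) 1.
    rewrite -sumX !mulr_sumr -sumrB -big_split /=; apply: eq_bigr => q _; ring.
  have : mu ^+ 2 * \sum_(q in A) 1 <= mu ^+ 2 * t by rewrite ler_pM2l ?exprn_gt0.
  have : \sum_(q in A) X q ^+ 2 <= mu ^+ 2 * t * (1 + eta).
    have sq : Q ^+ 2 * (1 + eta) = mu ^+ 2 * t * (1 + eta) * t by rewrite Qmu; ring.
    by move: sumX2; rewrite sq ler_pM2r.
  rewrite Qmu; lra.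
rewrite -(ler_pM2r (exprn_gt0 2 mu_gt0)) (_ : eta * t * _ = eta * mu ^+ 2 * t); last by ring.
apply: le_trans variance.
rewrite mulr_suml mulr_suml; apply: ler_sum => q _.
case: ifP => [below|_]; last by rewrite !mul0r sqr_ge0.
rewrite mul1r -exprMn; have : e * mu <= mu - X q by move: below; rewrite mulrBl mul1r; lra.
have : 0 <= e * mu by rewrite mulr_ge0 ?ltW.
nra.
Qed.

Section EdgeConcentration.
Variable R : realFieldType.
Variables (n d : nat) (L : {set 'I_d}) (B M : nat).
Hypothesis room : (M + n * B <= #|L|)%N.
Variables (u v : 'I_n) (s : nat).
Hypothesis lt_uv : (u < v)%N.
Hypothesis le_nB_s : (n * B <= s)%N.
Hypothesis lt_sM : (s < M)%N.

Local Notation l := (lvl_ord room lt_sM).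

Lemma edge_count_concentration (eps : R) : 0 < eps -> (0 < B)%N ->
  (\sum_(q in level_pairs l)
     (if (edge_count L B M u v s q)%:R < (1 - eps) * ((B * #|seed n d|)%:R / (tau l)%:R)
      then 1 else 0)) * eps ^+ 2
  <= (2 ^ n * (n * n))%:R / B%:R * (tau l)%:R.
Proof.
move=> eps_gt0 B_gt0; have seed_gt0 : (0 < #|seed n d|)%N by rewrite card_seed !expn_gt0.
apply: count_below_mean => //.
- by rewrite ltr0n /tau expn_gt0.
- by rewrite ltr0n muln_gt0 B_gt0.
- by rewrite sumr_const ler_nat card_level_pairs.
- by rewrite -natr_sum (sum_edge_count room lt_uv le_nB_s lt_sM).
under eq_bigr do rewrite -natrX.
have -> : ((B * #|seed n d|)%:R : R) ^+ 2 * (1 + (2 ^ n * (n * n))%:R / B%:R) =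
    (#|seed n d| ^ 2 * (B * B + 2 ^ n * (n * n * B)))%:R.
  have B_nz : (B%:R : R) != 0 by rewrite pnatr_eq0 -lt0n.
  by rewrite !(natrM, natrD, natrX); field.
by rewrite -natr_sum -natrM ler_nat (sum_sq_bound room lt_uv le_nB_s lt_sM).
Qed.

End EdgeConcentration.

Section Distribution.
Variable R : realType.
Variables (n d : nat) (E : rel 'I_n) (L : {set 'I_d}) (B M : nat).
Hypothesis room : (M + n * B <= #|L|)%N.
Hypothesis M_gt0 : (0 < M)%N.
Hypothesis B_gt0 : (0 < B)%N.

Definition embed_distr (f : {ffun 'I_n -> cube d}) : R :=
  (\sum_(x : sample n d B M) (embed L x.1 x.2 == f))%:R / #|sample n d B M|%:R.

Lemma card_sample_gt0 : (0 < #|sample n d B M|)%N.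
Proof. by rewrite card_prod card_prod !card_ord card_seed !muln_gt0 M_gt0 B_gt0 !expn_gt0. Qed.

Lemma embed_distr_is_distr : is_embedding_distr embed_distr.
Proof.
have sample_nz : (#|sample n d B M|%:R : R) != 0 by rewrite pnatr_eq0 -lt0n card_sample_gt0.
split; [|split].
- by move=> f; rewrite /embed_distr divr_ge0 ?ler0n.
- rewrite /embed_distr -mulr_suml -natr_sum exchange_big /= (eq_bigr (fun => 1%N)).
    by rewrite sum1_card divff.
  move=> x _.
  by rewrite (bigD1 (embed L x.1 x.2)) //= eqxx big1 // => f; rewrite eq_sym => /negbTE ->.
- move=> f; case: (pickP (fun x : sample n d B M => embed L x.1 x.2 == f)) => [x /eqP <- _|none].
    exact: embed_is_embedding.
  by rewrite /embed_distr big1 ?mul0r ?eqxx // => x _; rewrite none.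
Qed.

Definition forward_edge (e : 'I_n * 'I_n) : bool := E e.1 e.2 && (e.1 < e.2)%N.

Lemma sum_forward_edge_const (a : R) : \sum_(e | forward_edge e) a = (num_edges E)%:R * a.
Proof.
by rewrite /num_edges mulr_natl -sumr_const; apply: eq_bigl => e; rewrite inE.
Qed.

Lemma num_edges_le : (num_edges E <= n * n)%N.
Proof. by apply: leq_trans (max_card _) _; rewrite card_prod card_ord. Qed.

Lemma sum_edge_image_le s (x : sample n d B M) (q : cube d * cube d) :
  (\sum_(e | forward_edge e) (at_lvl L e.1 s x.1 && (edge_image L e.1 e.2 x == q))
    <= edge_in_image E (embed L x.1 x.2) q.1 q.2)%N.
Proof.
case: (boolP (edge_in_image _ _ _ _)) => [_|no_edge]; last first.
  rewrite leqn0 sum_nat_eq0; apply/forall_inP => -[a b] /andP[Eab _]; rewrite eqb0.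
  apply: contra no_edge => /andP[_ /eqP <-]; apply/existsP; exists a; apply/existsP; exists b.
  by rewrite Eab !eqxx.
pose hit e := forward_edge e && (edge_image L e.1 e.2 x == q).
rewrite big_mkcond /=; apply: leq_trans (sum_pred_le1 (P := hit) _).
  apply: leq_sum => e _; rewrite /hit.
  by case: (forward_edge e); case: (_ == _); rewrite ?andbF ?andbT ?leq_b1.
have /injectiveP inj := proj1 (andP (embed_is_embedding room x.1 x.2)).
move=> [a b] [a' b'] /andP[_ /eqP img] /andP[_ /eqP img']; move: img'; rewrite -img.
by case=> /inj -> /inj ->.
Qed.

Lemma prob_edge_ge_counts s (q : cube d * cube d) :
  (\sum_(e | forward_edge e) edge_count L B M e.1 e.2 s q)%:R / #|sample n d B M|%:R
  <= prob_edge E embed_distr q.1 q.2.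
Proof.
rewrite /prob_edge /embed_distr -mulr_suml -natr_sum ler_wpM2r ?invr_ge0 ?ler0n // ler_nat.
apply: leq_trans (_ : _ <= \sum_(x : sample n d B M) edge_in_image E (embed L x.1 x.2) q.1 q.2)%N _.
  by rewrite exchange_big /=; apply: leq_sum => x _; apply: sum_edge_image_le.
rewrite [X in (_ <= X)%N]exchange_big /=; apply: leq_sum => x _.
case: (boolP (edge_in_image _ _ _ _)) => [img|//].
by rewrite (bigD1 (embed L x.1 x.2)) //= eqxx.
Qed.

Lemma prob_edge_large (eps : R) s (lt_sM : (s < M)%N) (q : cube d * cube d) :
  let t := (tau (lvl_ord room lt_sM))%:R in
  (forall e, forward_edge e ->
     (1 - eps) * ((B * #|seed n d|)%:R / t) <= (edge_count L B M e.1 e.2 s q)%:R) ->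
  (1 - eps) * (num_edges E)%:R / (#|L|%:R * t) <= prob_edge E embed_distr q.1 q.2.
Proof.
move=> t large; have tau_gt0 : (0 < tau (lvl_ord room lt_sM))%N by rewrite expn_gt0.
have t_gt0 : 0 < t by rewrite ltr0n.
have prob_ge0 : 0 <= prob_edge E embed_distr q.1 q.2.
  by apply: sumr_ge0 => f _; rewrite divr_ge0 ?ler0n.
have [eps_le1|eps_gt1] := lerP 0 (1 - eps); last first.
  apply: le_trans (_ : _ <= 0) prob_ge0; apply: mulr_le0_ge0.
    by apply: mulr_le0_ge0; [apply: ltW | apply: ler0n].
  by rewrite invr_ge0 mulr_ge0 ?ler0n ?(ltW t_gt0).
apply: le_trans (prob_edge_ge_counts s q); rewrite natr_sum.
apply: le_trans (_ : _ <= \sum_(e | forward_edge e)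
    (1 - eps) * ((B * #|seed n d|)%:R / t) / #|sample n d B M|%:R) _.
  have nz (k : nat) : (0 < k)%N -> (k%:R : R) != 0 by move=> k_gt0; rewrite pnatr_eq0 -lt0n.
  have M_le_L : (M <= #|L|)%N := leq_trans (leq_addr _ _) room.
  have seed_gt0 : (0 < #|seed n d|)%N by rewrite card_seed !expn_gt0.
  rewrite sum_forward_edge_const card_prod card_prod !card_ord.
  have -> : (num_edges E)%:R * ((1 - eps) * ((B * #|seed n d|)%:R / t) / (M * B * #|seed n d|)%:R)
      = (1 - eps) * (num_edges E)%:R / (M%:R * t).
    by rewrite !natrM; field; rewrite !nz.
  have L_gt0 : (0 < #|L|)%N := leq_trans M_gt0 M_le_L.
  rewrite ler_wpM2l ?mulr_ge0 ?ler0n // lef_pV2 ?posrE ?mulr_gt0 ?ltr0n //.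
  by rewrite ler_pM2r // ler_nat.
by rewrite -mulr_suml ler_wpM2r ?invr_ge0 ?ler0n // ler_sum.
Qed.

Lemma card_bad_pairs_le (eps : R) s (lt_sM : (s < M)%N) :
  #|bad_pairs E embed_distr eps L (lvl_ord room lt_sM)|%:R <=
    \sum_(e | forward_edge e) \sum_(q in level_pairs (lvl_ord room lt_sM))
       (if (edge_count L B M e.1 e.2 s q)%:R <
           (1 - eps) * ((B * #|seed n d|)%:R / (tau (lvl_ord room lt_sM))%:R) then 1 else 0 : R).
Proof.
set thr := (1 - eps) * _.
have low_ge0 (e : 'I_n * 'I_n) q :
  0 <= (if (edge_count L B M e.1 e.2 s q)%:R < thr then 1 else 0 : R) by case: (_ < _).
rewrite -sum1_card natr_sum exchange_big /= big_mkcond [X in _ <= X]big_mkcond /=.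
apply: ler_sum => q _; case: ifP => [|_]; last by case: ifP => // _; apply: sumr_ge0.
rewrite inE => /and3P[lex delta not_large]; rewrite inE lex delta /=.
have [e /andP[fwd_e low_e]] : exists e, forward_edge e && ((edge_count L B M e.1 e.2 s q)%:R < thr).
  apply/existsP; apply: contraNT not_large => /existsPn high.
  by apply: prob_edge_large => e fwd_e; move: (high e); rewrite fwd_e /= -leNgt.
by rewrite (bigD1 e) //= low_e lerDl; apply: sumr_ge0.
Qed.

Lemma good_level_interior (eps : R) s (le_nB_s : (n * B <= s)%N) (lt_sM : (s < M)%N) :
  0 < eps -> ((n * n) * (2 ^ n * (n * n)))%:R <= eps ^+ 3 * B%:R ->
  good_level E embed_distr eps L (lvl_ord room lt_sM).
Proof.
move=> eps_gt0 B_large; set t : R := (tau (lvl_ord room lt_sM))%:R.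
set eta : R := (2 ^ n * (n * n))%:R / B%:R.
have t_gt0 : 0 < t by rewrite ltr0n expn_gt0.
have nn_eta : (n * n)%:R * eta <= eps ^+ 3 by rewrite /eta mulrA -natrM ler_pdivrMr ?ltr0n.
rewrite /good_level; apply: le_trans (card_bad_pairs_le eps lt_sM) _.
apply: le_trans (_ : _ <= \sum_(e | forward_edge e) eta * t / eps ^+ 2) _.
  apply: ler_sum => -[u v] /andP[_ lt_uv]; rewrite ler_pdivlMr ?exprn_gt0 //.
  exact: edge_count_concentration.
rewrite sum_forward_edge_const; apply: le_trans (_ : _ <= (n * n)%:R * (eta * t / eps ^+ 2)) _.
  rewrite ler_wpM2r ?ler_nat ?num_edges_le //.
  by apply: divr_ge0; [apply: mulr_ge0; [apply: divr_ge0 | apply: ltW] | apply/exprn_ge0/ltW].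
rewrite mulrA mulrA ler_pdivrMr ?exprn_gt0 // (_ : eps * t * eps ^+ 2 = eps ^+ 3 * t); last by ring.
by rewrite ler_pM2r.
Qed.

End Distribution.

Lemma exists_nat_mul_ge (R : realType) (K e : R) : 0 < e -> exists N : nat, K <= e * N%:R.
Proof.
move=> e_gt0; exists (Num.truncn (K / e)).+1.
by rewrite mulrC -ler_pdivrMr // ltW // truncnS_gt.
Qed.

Unset Implicit Arguments.
Theorem lemma3p2 (R : realType) (n : nat) (E : rel 'I_n)
  (E_irr : irreflexive E) (E_sym : symmetric E) (eps : R) (eps_gt0 : (0 < eps)%R) :
  exists C : nat, forall (d : nat) (L : {set 'I_d}), (C <= #|L|)%N ->
    exists p : {ffun 'I_n -> cube d} -> R,
      is_embedding_distr p /\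
      (#|[set l in L | ~~ good_level E p eps L l]|%:R <= eps * #|L|%:R)%R.
Proof.
(* B makes the n^2 edges times the relative variance 2^n n^2 / B at most eps^3, and C makes
   the 2nB outermost levels of L at most an eps-fraction of L. *)
have [B0 B0_large] := exists_nat_mul_ge ((n * n * (2 ^ n * (n * n)))%:R) (exprn_gt0 3 eps_gt0).
set B := B0.+1.
have B_large : ((n * n) * (2 ^ n * (n * n)))%:R <= eps ^+ 3 * B%:R.
  by apply: le_trans B0_large _; rewrite ler_pM2l ?exprn_gt0 // ler_nat.
have [C C_large] := exists_nat_mul_ge (2 * n * B)%:R eps_gt0.
exists (C + (n * B).+1)%N => d L L_large.
set M := (#|L| - n * B)%N.
have room : (M + n * B <= #|L|)%N by rewrite subnK //; lia.
have M_gt0 : (0 < M)%N by rewrite subn_gt0; lia.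
exists (embed_distr R L B M); split; first exact: embed_distr_is_distr.
have bad_outer : [set l in L | ~~ good_level E (embed_distr R L B M) eps L l] \subset
    [set l in L | (lindex L l < n * B)%N || (M <= lindex L l)%N].
  apply/subsetP => l; rewrite !inE => /andP[lL not_good]; rewrite lL /=.
  apply: contraNT not_good; rewrite negb_or -leqNgt -ltnNge => /andP[le_nB lt_M].
  have -> : l = lvl_ord room lt_M by apply: ord_inj; rewrite /= lnth_lindex.
  exact: good_level_interior.
apply: le_trans (_ : (2 * n * B)%:R <= _).
  rewrite ler_nat; apply: leq_trans (subset_leq_card bad_outer) _.
  by apply: leq_trans (card_outer_levels _ _ _) _; rewrite /M subKn; lia.
by apply: le_trans C_large _; rewrite ler_pM2l // ler_nat; lia.
Qed.
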